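(* Let $\bm{N}=(N_0,\ldots,N_{n-1},-\sum_iN_i)$ with each $N_i\in\mathbb{Z}_{\ge0}$. A weak composition $\bm{j}=(j_0,\ldots,j_{n-1})$ of $\binom n2$ belongs to $\mathcal{S}^+_n(\bm{N})$ if and only if $j_i\le N_i+n-i-1$ for $i=0,\ldots,n-1$ and $\sum_{i=0}^k j_i\ge\sum_{i=0}^k(n-1-i)$ for all $k=0,\ldots,n-1$.
   Context: For $\bm{M}=(M_0,\ldots,M_n)\in\mathbb{Z}^{n+1}$ with $\sum_iM_i=0$, $K_n(\bm{M})$ is the number of integer vectors $(f_{ij})_{0\le i<j\le n}\in\mathbb{Z}_{\ge0}^{\binom{n+1}{2}}$ with $\sum_{j>i} f_{ij}-\sum_{k<i} f_{ki}=M_i$ for all $i$. Let $\bm\delta=(n-1,n-2,\ldots,1,0)$. For a weak composition $\bm{j}$ of $\binom n2$ (nonnegative integers summing to $\binom n2$), $K_n(\bm{j}-\bm\delta)$ means $K_n(j_0-(n-1),j_1-(n-2),\ldots,j_{n-1}-0,0)$. $\mathcal{S}^+_n(\bm{N})$ is the set of weak compositions $\bm{j}$ of $\binom n2$ such that $\binom{N_0+n-1}{j_0}\binom{N_1+n-2}{j_1}\cdots\binom{N_{n-1}}{j_{n-1}}\cdot K_n(\bm{j}-\bm\delta)>0$. *)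

From mathcomp Require Import all_boot all_order all_algebra.
Set Implicit Arguments. Unset Strict Implicit. Unset Printing Implicit Defensive.
Import GRing.Theory Num.Theory.

Definition is_flow (n : nat) (M : 'I_n.+1 -> int)
    (f : 'I_n.+1 * 'I_n.+1 -> nat) : bool :=
  [forall p : 'I_n.+1 * 'I_n.+1, (f p != 0%N) ==> (p.1 < p.2)%N] &&
  [forall i : 'I_n.+1,
     ((\sum_(j : 'I_n.+1 | (i < j)%N) f (i, j))%:Z
      - (\sum_(k : 'I_n.+1 | (k < i)%N) f (k, i))%:Z == M i)%R].

(* Every flow entry is bounded by B(M) = sum_i |M_i| (acyclic flow
   decomposition), so counting flows with entries in [0, B(M)] counts all
   flows; this makes K_n(M) a finite cardinality. *)
Definition flow_bound (n : nat) (M : 'I_n.+1 -> int) : nat :=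
  \sum_(i : 'I_n.+1) `|M i|%N.

Definition Kostant (n : nat) (M : 'I_n.+1 -> int) : nat :=
  #|[set f : {ffun 'I_n.+1 * 'I_n.+1 -> 'I_(flow_bound M).+1}
       | is_flow M (fun p => nat_of_ord (f p))]|.

(* j - delta, extended by a final 0 coordinate:
   (j_0-(n-1), j_1-(n-2), ..., j_{n-1}-0, 0). *)
Definition j_minus_delta (n : nat) (j : 'I_n -> nat) : 'I_n.+1 -> int :=
  fun k => if unlift ord_max k is Some i
           then ((j i)%:Z - (n.-1 - i)%N%:Z)%R else 0%R.

(* S^+_n(N), with N given by its first n coordinates N_0..N_{n-1}
   (the last coordinate -sum N_i plays no role). *)
Definition in_Splus (n : nat) (N : 'I_n -> nat) (j : 'I_n -> nat) : bool :=
  (\sum_(i < n) j i == 'C(n, 2)) &&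
  (0 < (\prod_(i < n) 'C(N i + n - i - 1, j i)) * Kostant (j_minus_delta j))%N.

From mathcomp Require Import all_boot all_order all_algebra zify.
Import Order.TTheory GRing.Theory Num.Theory.
Set Implicit Arguments. Unset Strict Implicit.

(* The binomial factors are positive exactly when j_i <= N_i + n - i - 1, so
   everything rests on a positivity criterion for the Kostant partition
   function: for M of total sum 0, K_n(M) > 0 iff every prefix sum
   M_0 + ... + M_(m-1) is nonnegative.  Necessity: for any flow this prefix
   sum is the total flow across the cut {0..m-1} | {m..n}.  Sufficiency: the
   prefix sums, placed on the edges (m-1, m), form a flow.  For M = j - delta
   the prefix sums are those of j minus those of delta. *)

Lemma Posz_sum (I : Type) (r : seq I) (P : pred I) (F : I -> nat) :
  Posz (\sum_(i <- r | P i) F i)%N = (\sum_(i <- r | P i) Posz (F i))%R.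
Proof. exact: (big_morph Posz PoszD). Qed.

Lemma prod_binomial_gt0 (I : finType) (a b : I -> nat) :
  (0 < \prod_(i : I) 'C(a i, b i))%N = [forall i, b i <= a i]%N.
Proof.
apply/idP/forallP => [/gt0_prodn hC i | hba].
  by rewrite -bin_gt0 hC.
by apply: prodn_gt0 => i; rewrite bin_gt0.
Qed.

Section Flows.
Variables (n : nat) (M : 'I_n.+1 -> int).
Local Notation arc := ('I_n.+1 * 'I_n.+1)%type.

Definition prefix_sum (m : nat) : int := (\sum_(t < n.+1 | (t < m)%N) M t)%R.

Lemma prefix_sum0 : prefix_sum 0 = 0%R.
Proof. by rewrite /prefix_sum big_pred0. Qed.

Lemma prefix_sumS (i : 'I_n.+1) : prefix_sum i.+1 = (prefix_sum i + M i)%R.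
Proof.
rewrite /prefix_sum (bigD1 i) //= addrC; congr (_ + _)%R.
by apply: eq_bigl => t; rewrite ltnS ltn_neqAle andbC.
Qed.

Lemma prefix_sum_full m : (n < m)%N -> prefix_sum m = (\sum_t M t)%R.
Proof. by move=> ltnm; apply: eq_bigl => t; rewrite (leq_trans (ltn_ord t)). Qed.

Lemma prefix_sum_norm_le m : (`|prefix_sum m| <= flow_bound M)%N.
Proof.
rewrite -lez_nat abszE /flow_bound Posz_sum.
apply: le_trans (ler_norm_sum _ _ _) _.
rewrite [leRHS](bigID (fun t : 'I_n.+1 => (t < m)%N)) /= lerDl.
by apply: sumr_ge0 => t _; rewrite abszE.
Qed.

Lemma prefix_sum_flow (f : arc -> nat) m :
  is_flow M f ->
  prefix_sum m = Posz (\sum_(p : arc | (p.1 < m <= p.2)%N) f p).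
Proof.
case/andP => _ /forallP conservation.
have outE : (\sum_(a < n.+1 | (a < m)%N) \sum_(b < n.+1 | (a < b)%N) f (a, b) =
    \sum_(p : arc | (p.1 < m) && (p.1 < p.2)) f p)%N.
  by rewrite pair_big_dep; apply: eq_bigr => -[].
have inE : (\sum_(b < n.+1 | (b < m)%N) \sum_(a < n.+1 | (a < b)%N) f (a, b) =
    \sum_(p : arc | (p.1 < m) && (p.1 < p.2) && (p.2 < m)) f p)%N.
  rewrite pair_big_dep (reindex_inj (can_inj swap_pairK)) /=.
  apply: eq_big => [[a b]|[]] //=; apply/idP/idP.
    by case/andP=> bm ab; rewrite ab bm (ltn_trans ab bm).
  by case/andP=> /andP[_ ab] bm; rewrite ab bm.
rewrite /prefix_sum; under eq_bigr => t _ do rewrite -(eqP (conservation t)).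
rewrite big_split /= sumrN -!Posz_sum outE inE.
rewrite (bigID (fun p : arc => p.2 < m)%N) /= PoszD addrAC subrr add0r; congr Posz.
apply: eq_bigl => -[a b] /=; case: (ltnP a m) => //= am.
rewrite -leqNgt; case: (leqP m b) => mb; last by rewrite andbF.
by rewrite andbT (leq_trans am mb).
Qed.

Lemma eq_is_flow (f g : arc -> nat) : f =1 g -> is_flow M f = is_flow M g.
Proof.
move=> fg; rewrite /is_flow; congr (_ && _); apply: eq_forallb => x.
  by rewrite fg.
by congr (Posz _ - Posz _ == _)%R; apply: eq_bigr => y _; rewrite fg.
Qed.

Lemma Kostant_gt0_of_flow (f : arc -> nat) :
  is_flow M f -> (forall p, f p <= flow_bound M)%N -> (0 < Kostant M)%N.
Proof.
move=> flow_f le_f_bound; apply/card_gt0P.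
exists [ffun p => inord (f p)]; rewrite inE (eq_is_flow (g := f)) // => p.
by rewrite ffunE inordK // ltnS.
Qed.

Definition path_flow (p : arc) : nat :=
  if val p.2 == (val p.1).+1 then `|prefix_sum p.2|%N else 0%N.

Lemma path_flow_out (i : 'I_n.+1) : (\sum_t M t)%R = 0%R ->
  (\sum_(b < n.+1 | (i < b)%N) path_flow (i, b))%N = `|prefix_sum i.+1|%N.
Proof.
move=> total0; rewrite -big_mkcondr /=.
have [lt_i_n | le_n_i] := ltnP i n.
  rewrite (big_pred1 (Ordinal (lt_i_n : i.+1 < n.+1)%N)) // => b.
  by rewrite /= -[RHS]val_eqE /= andb_idl // => /eqP ->.
rewrite big_pred0 => [|b]; first by rewrite prefix_sum_full ?total0 ?ltnS.
by rewrite andbC; case: eqP => // eb; move: (ltn_ord b); rewrite eb ltnS ltnNge le_n_i.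
Qed.

Lemma path_flow_in (i : 'I_n.+1) :
  (\sum_(a < n.+1 | (a < i)%N) path_flow (a, i))%N = `|prefix_sum i|%N.
Proof.
rewrite -big_mkcondr /=; case: i => [[|i] lt_i_n] /=.
  by rewrite big_pred0 ?prefix_sum0.
rewrite (big_pred1 (Ordinal (ltnW lt_i_n))) // => a.
by rewrite /= eqSS -[RHS]val_eqE /= eq_sym; apply/andb_idl; rewrite ltnS leq_eqVlt => ->.
Qed.

Lemma path_flow_is_flow :
  (forall m, 0 <= prefix_sum m)%R -> (\sum_t M t)%R = 0%R -> is_flow M path_flow.
Proof.
move=> prefix_ge0 total0; apply/andP; split; apply/forallP.
  by move=> p; apply/implyP; rewrite /path_flow; case: ifP => // /eqP ->.
move=> i; rewrite path_flow_out // path_flow_in !gez0_abs //.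
by rewrite prefix_sumS addrAC subrr add0r.
Qed.

Lemma Kostant_gt0 :
  (0 < Kostant M)%N <-> (forall m, 0 <= prefix_sum m)%R /\ (\sum_t M t)%R = 0%R.
Proof.
split=> [/card_gt0P [F] | [prefix_ge0 total0]]; last first.
  apply: Kostant_gt0_of_flow (path_flow_is_flow prefix_ge0 total0) _ => p.
  by rewrite /path_flow; case: eqP => // _; apply: prefix_sum_norm_le.
rewrite inE => flowF; split=> [m|]; first by rewrite (prefix_sum_flow m flowF).
rewrite -(prefix_sum_full (ltnSn n)) (prefix_sum_flow _ flowF) big_pred0 // => p.
by rewrite [_ <= p.2]leqNgt (ltn_ord p.2) andbF.
Qed.
End Flows.

Lemma sum_delta n : (\sum_(i < n) (n - 1 - i) = 'C(n, 2))%N.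
Proof.
rewrite (reindex_inj rev_ord_inj) /= -bin2_sum big_mkord.
by apply: eq_bigr => i _; have := ltn_ord i; lia.
Qed.

Section JMinusDelta.
Variables (n : nat) (j : 'I_n -> nat).

Lemma j_minus_delta_widen (i : 'I_n) :
  j_minus_delta j (widen_ord (leqnSn n) i) = (Posz (j i) - Posz (n - 1 - i))%R.
Proof.
have -> : widen_ord (leqnSn n) i = lift ord_max i.
  by apply: val_inj; rewrite /= /bump leqNgt ltn_ord.
by rewrite /j_minus_delta liftK subn1.
Qed.

Lemma j_minus_delta_max : j_minus_delta j ord_max = 0%R.
Proof. by rewrite /j_minus_delta unlift_none. Qed.

Lemma prefix_sum_j_minus_delta m :
  prefix_sum (j_minus_delta j) m =
  (Posz (\sum_(i < n | (i < m)%N) j i) - Posz (\sum_(i < n | (i < m)%N) (n - 1 - i)))%R.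
Proof.
rewrite /prefix_sum big_mkcond big_ord_recr /= j_minus_delta_max if_same addr0.
rewrite !Posz_sum -sumrN -big_split /= [RHS]big_mkcond /=.
by apply: eq_bigr => i _; rewrite j_minus_delta_widen; case: ifP.
Qed.

Hypothesis sum_j : (\sum_(i < n) j i = 'C(n, 2))%N.

Lemma sum_j_minus_delta : (\sum_t j_minus_delta j t)%R = 0%R.
Proof.
have full F : (\sum_(i < n | (i < n.+1)%N) F i = \sum_(i < n) F i)%N.
  by apply: eq_bigl => i; rewrite ltnS ltnW.
rewrite -(prefix_sum_full _ (ltnSn n)) prefix_sum_j_minus_delta.
by rewrite !full sum_j sum_delta subrr.
Qed.

Lemma prefix_sum_j_minus_delta_ge0 :
  (forall m, 0 <= prefix_sum (j_minus_delta j) m)%R <->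
  (forall k : 'I_n,
     \sum_(i < n | (i <= k)%N) (n - 1 - i) <= \sum_(i < n | (i <= k)%N) j i)%N.
Proof.
have ltSE F (k : nat) :
    (\sum_(i < n | (i < k.+1)%N) F i = \sum_(i < n | (i <= k)%N) F i)%N.
  by apply: eq_bigl => i; rewrite ltnS.
split=> [prefix_ge0 k | prefix_le m].
  by have := prefix_ge0 k.+1; rewrite prefix_sum_j_minus_delta !ltSE subr_ge0 lez_nat.
have [le_m_n | lt_n_m] := leqP m n; last first.
  by rewrite prefix_sum_full // sum_j_minus_delta.
case: m le_m_n => [|k lt_k_n]; first by rewrite prefix_sum0.
rewrite prefix_sum_j_minus_delta !ltSE subr_ge0 lez_nat.
exact: prefix_le (Ordinal lt_k_n).
Qed.
End JMinusDelta.

Theorem proposition6p4 (n : nat) (N : 'I_n -> nat) (j : 'I_n -> nat) :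
  (\sum_(i < n) j i = 'C(n, 2))%N ->
  (in_Splus N j <->
     ((forall i : 'I_n, (j i <= N i + n - i - 1)%N) /\
      (forall k : 'I_n,
         (\sum_(i < n | (i <= k)%N) (n - 1 - i) <= \sum_(i < n | (i <= k)%N) j i)%N))).
Proof.
move=> sum_j; rewrite /in_Splus sum_j eqxx muln_gt0 prod_binomial_gt0 /=.
split=> [/andP[/forallP le_j_N /Kostant_gt0[prefix_ge0 _]] | [le_j_N prefix_le]].
  by split=> //; apply/prefix_sum_j_minus_delta_ge0.
apply/andP; split; first exact/forallP.
apply/Kostant_gt0; split; last exact: sum_j_minus_delta.
exact/prefix_sum_j_minus_delta_ge0.
Qed.
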